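(* Fix an integer $n\geq1$ and a polynomial $f(q)\in\mathbb{Z}[q]$. Then $f(q)\in G_n\mathbb{Z}[q]$ if and only if $f(q)\in (1+q^m)^{\lfloor n/2m\rfloor}\mathbb{Z}[q]$ for all $1\leq m\leq \lfloor n/2\rfloor$, where $$G_n=\prod_{k=1}^{\lfloor\log_2 n\rfloor}\prod_{i=1}^{\lfloor n/2^k \rfloor}(1+q^i).$$ *)

From mathcomp Require Import all_boot all_order all_algebra.
Set Implicit Arguments. Unset Strict Implicit. Unset Printing Implicit Defensive.
Import GRing.Theory.
Local Open Scope ring_scope.

Definition Gn (n : nat) : {poly int} :=
  \prod_(1 <= k < (trunc_log 2 n).+1) \prod_(1 <= i < (n %/ 2 ^ k)%N.+1) (1 + 'X^i).

Definition in_ideal (g f : {poly int}) : Prop := exists h : {poly int}, f = h * g.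

From mathcomp Require Import all_boot all_order all_algebra all_field zify.
From Stdlib Require Import Classical.
Set Implicit Arguments. Unset Strict Implicit. Unset Printing Implicit Defensive.
Import GRing.Theory Num.Theory.

(* Both sides say that some monic polynomials divide f; since division by a
   monic integer polynomial stays in Z[q], this can be tested over the
   algebraic numbers, root by root.  For x with least m0 > 0 such that
   x^m0 = -1, the powers x^i equal to -1 are those with i an odd multiple of
   m0.  So x is a root of (1 + q^m)^(n/2m) of multiplicity n/2m when m is an
   odd multiple of m0 and 0 otherwise, and, counting the odd multiples of m0
   up to each n/2^k and telescoping over k, a root of G_n of multiplicity
   n/2m0: the largest of the former values, attained at m = m0. *)

Lemma sum_odd_multiples M m :
  (\sum_(1 <= i < M.+1) ((m %| i) && odd (i %/ m)) = M %/ m - M %/ (2 * m))%N.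
Proof.
have [->|m_gt0] := posnP m.
  rewrite !muln0 !divn0 big1_seq // => i; rewrite mem_index_iota dvd0n.
  by case: i.
elim: M => [|M IHM]; first by rewrite big_geq ?div0n.
rewrite big_nat_recr //= IHM.
have le_div : (M %/ (2 * m) <= M %/ m)%N by rewrite leq_div2l ?leq_pmull.
have [dvd_m|ndvd_m] := boolP (m %| M.+1); last first.
  have ndvd_2m : (2 * m %| M.+1) = false.
    by apply: contraNF ndvd_m; apply: dvdn_trans; apply: dvdn_mull.
  by rewrite !divnS ?muln_gt0 // (negPf ndvd_m) ndvd_2m addn0.
have dvd_2m : (2 * m %| M.+1) = ~~ odd (M.+1 %/ m).
  by rewrite -{1}(divnK dvd_m) dvdn_pmul2r // dvdn2.
rewrite [X in _ = X - _]divnS // [X in _ = _ - X]divnS ?muln_gt0 //.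
rewrite dvd_m dvd_2m.
by case: odd => /=; clear -le_div; lia.
Qed.

Lemma telescope_sumn_nonincr n m (f : nat -> nat) : (n <= m)%N ->
    {homo f : x y /~ (x <= y)%N} ->
  (\sum_(n <= k < m) (f k - f k.+1) = f n - f m)%N.
Proof.
move=> le_nm f_nonincr; elim: m le_nm => [|m IHm].
  by rewrite leqn0 => /eqP->; rewrite big_geq ?subnn.
rewrite leq_eqVlt => /predU1P[->|lt_nm]; first by rewrite big_geq ?subnn.
rewrite big_nat_recr //= IHm //.
by move: (f_nonincr _ _ (leqnSn m)) (f_nonincr m n lt_nm); clear; lia.
Qed.

Lemma sum_odd_multiples_halvings n m :
  (\sum_(1 <= k < (trunc_log 2 n).+1) (n %/ 2 ^ k %/ m - n %/ 2 ^ k %/ (2 * m))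
    = n %/ (2 * m))%N.
Proof.
pose b k := (n %/ 2 ^ k %/ m)%N.
transitivity (\sum_(1 <= k < (trunc_log 2 n).+1) (b k - b k.+1))%N.
  by apply: eq_bigr => k _; rewrite /b expnSr -!divnMA mulnA.
rewrite telescope_sumn_nonincr // => [|i j le_ij]; last first.
  by rewrite /b leq_div2r // leq_div2l ?expn_gt0 ?leq_pexp2l.
rewrite /b (@divn_small n (2 ^ (trunc_log 2 n).+1)) ?trunc_log_ltn //.
by rewrite div0n subn0 expn1 -divnMA.
Qed.

Local Open Scope ring_scope.

Lemma mup_prod (F : fieldType) (I : Type) (r : seq I) (P : pred I)
    (G : I -> {poly F}) (x : F) :
    (forall i, P i -> G i != 0) ->
  mup x (\prod_(i <- r | P i) G i) = (\sum_(i <- r | P i) mup x (G i))%N.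
Proof.
move=> G_neq0; elim: r => [|i r IHr]; first by rewrite !big_nil mupNroot ?root1.
rewrite !big_cons; case: ifP => // Pi.
have prod_neq0 : \prod_(j <- r | P j) G j != 0.
  apply: (big_ind (fun p => p != 0)) => // [|p q]; first exact: oner_neq0.
  exact: mulf_neq0.
by rewrite mupM ?G_neq0 // IHr.
Qed.

Lemma mupX (F : fieldType) (x : F) (p : {poly F}) N :
  p != 0 -> mup x (p ^+ N) = (N * mup x p)%N.
Proof.
move=> p_neq0; elim: N => [|N IHN]; first by rewrite expr0 mupNroot ?root1.
by rewrite exprS mupM ?expf_neq0 // IHN mulSn.
Qed.

Lemma mup_dvdp_leq (F : fieldType) (x : F) (p q : {poly F}) :
  q != 0 -> p %| q -> (mup x p <= mup x q)%N.
Proof.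
move=> q_neq0 dvd_pq; have p_neq0 : p != 0.
  by apply: contraNneq q_neq0 => p0; rewrite -dvd0p -p0.
by rewrite mup_geq // (dvdp_trans _ dvd_pq) // -mup_geq.
Qed.

Lemma prod_XsubC_dvdp (F : fieldType) (r : seq F) (f : {poly F}) :
  f != 0 -> (forall x, count_mem x r <= mup x f)%N ->
  \prod_(z <- r) ('X - z%:P) %| f.
Proof.
elim: r f => [|a r IHr] f f_neq0 le_count; first by rewrite big_nil dvd1p.
have dvd_af : 'X - a%:P %| f.
  by rewrite XsubC_dvd // (leq_trans _ (le_count a)) //= eqxx.
have f_eq := divpK dvd_af; set q := f %/ _ in f_eq.
have q_neq0 : q != 0 by apply: contraNneq f_neq0 => q0; rewrite -f_eq q0 mul0r.
rewrite big_cons -f_eq mulrC dvdp_mul2r ?polyXsubC_eq0 //.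
apply: IHr => // x; move: (le_count x); rewrite -f_eq mupM ?polyXsubC_eq0 //=.
have := mup_XsubCX 1 x a; rewrite expr1 => ->.
by case: (a == x) => /=; rewrite ?addn0 // add1n addn1 ltnS.
Qed.

Lemma dvdp_mupP (F : closedFieldType) (g f : {poly F}) : g != 0 -> f != 0 ->
  reflect (forall x, mup x g <= mup x f)%N (g %| f).
Proof.
move=> g_neq0 f_neq0; apply: (iffP idP) => [dvd_gf x|le_mup].
  exact: mup_dvdp_leq.
have lc_neq0 : lead_coef g != 0 by rewrite lead_coef_eq0.
have [r g_eq] := closed_field_poly_normal g.
rewrite g_eq dvdpZl // prod_XsubC_dvdp // => x.
rewrite -mu_prod_XsubC (leq_trans _ (le_mup x)) // mup_dvdp_leq //.
by rewrite [X in _ %| X]g_eq dvdpZr.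
Qed.

Lemma dvdp_map_monicP (R : idomainType) (F : fieldType)
    (iota : {rmorphism R -> F}) (g f : {poly R}) :
    injective iota -> g \is monic ->
  reflect (exists h, f = h * g) (map_poly iota g %| map_poly iota f).
Proof.
move=> iota_inj g_monic; apply: (iffP idP) => [dvd_gf|[h ->]]; last first.
  by rewrite rmorphM dvdp_mull.
have f_eq := Pdiv.IdomainMonic.divp_eq g_monic f.
exists (f %/ g); suff r0 : f %% g = 0 by rewrite {1}f_eq r0 addr0.
apply: contraTeq dvd_gf => r_neq0.
rewrite [X in _ %| map_poly _ X]f_eq rmorphD rmorphM /= dvdp_addr ?dvdp_mull //.
rewrite gtNdvdp -?size_poly_eq0 ?size_map_inj_poly ?rmorph0 ?size_poly_eq0 //.
by rewrite ltn_modp monic_neq0.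
Qed.

(* m0 = 0 stands for "no positive power of x is -1"; then n %/ (2 * m0) = 0
   below, so this case needs no separate treatment. *)
Lemma exprn_eqN1_period (R : numDomainType) (x : R) :
  exists m0, forall i, (x ^+ i == -1) = (m0 %| i)%N && odd (i %/ m0).
Proof.
have one_neqN1 : (1 : R) != -1 by rewrite -addr_eq0 -(natrD _ 1 1) pnatr_eq0.
have [ex|no_m0] := classic (exists i, (0 < i)%N && (x ^+ i == -1)); last first.
  exists 0%N => -[|i]; first by rewrite expr0 (negPf one_neqN1).
  by apply/negP => xi; apply: no_m0; exists i.+1.
have [m0 /andP[m0_gt0 /eqP xm0] m0_min] := ex_minnP ex.
have xr_neqN1 r : (0 < r < m0)%N -> x ^+ r != -1.
  case/andP=> r_gt0 lt_rm0; apply: contraTneq lt_rm0 => xr.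
  by rewrite -leqNgt m0_min // r_gt0 xr /=.
exists m0 => i; rewrite {1}(divn_eq i m0) exprD mulnC exprM xm0 -signr_odd.
have [r0|r_gt0] := posnP (i %% m0).
  rewrite r0 expr0 mulr1 /dvdn r0 eqxx.
  by case: odd; rewrite ?expr1 ?eqxx // expr0 (negPf one_neqN1).
have lt_rm0 : (i %% m0 < m0)%N by rewrite ltn_mod.
have xr_neq1 : x ^+ (i %% m0) != 1.
  have /xr_neqN1 : (0 < m0 - i %% m0 < m0)%N.
    by rewrite subn_gt0 lt_rm0 ltn_subrL r_gt0.
  apply: contraNneq => xr.
  by apply/eqP; rewrite -xm0 -[in RHS](subnK (ltnW lt_rm0)) exprD xr mulr1.
rewrite /dvdn (gtn_eqF r_gt0) /=; apply/negbTE.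
case: odd; rewrite ?expr1 ?expr0 ?mulN1r ?mul1r ?eqr_opp //.
by rewrite xr_neqN1 ?r_gt0.
Qed.

Lemma monic_oneDXn (R : nzRingType) i :
  (0 < i)%N -> (1 + 'X^i : {poly R}) \is monic.
Proof. by move=> i_gt0; rewrite addrC -polyC1 monicXnaddC. Qed.

Lemma oneDXn_neq0 (F : numFieldType) i : (1 + 'X^i : {poly F}) != 0.
Proof.
apply/eqP => /(congr1 (horner^~ 1)) /eqP.
by rewrite !hornerE expr1n -(natrD _ 1 1) pnatr_eq0.
Qed.

Lemma map_oneDXn (R S : nzRingType) (iota : {rmorphism R -> S}) i :
  map_poly iota (1 + 'X^i) = 1 + 'X^i.
Proof. by rewrite rmorphD rmorph1 /= map_polyXn. Qed.

Lemma separable_oneDXn (F : numFieldType) i :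
  (0 < i)%N -> separable_poly (1 + 'X^i : {poly F}).
Proof.
move=> i_gt0; rewrite unlock derivD derivC add0r derivXn -scaler_nat.
rewrite coprimepZr ?pnatr_eq0 ?gtn_eqF // coprimep_expr // coprimepX.
by rewrite rootE !hornerE expr0n gtn_eqF // addr0 oner_neq0.
Qed.

Lemma mup_oneDXn (F : numFieldType) (x : F) i :
  (0 < i)%N -> mup x (1 + 'X^i) = (x ^+ i == -1).
Proof.
move=> i_gt0; have p_neq0 := monic_neq0 (monic_oneDXn F i_gt0).
have rootE : root (1 + 'X^i) x = (x ^+ i == -1).
  by rewrite /root !hornerE addrC addr_eq0.
have [xi|xi] /= := boolP (x ^+ i == -1); last by rewrite mupNroot ?rootE.
apply/eqP; rewrite eqn_leq -XsubC_dvd // dvdp_XsubCl rootE xi andbT.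
by rewrite mup_leq // separable_nosquare ?separable_oneDXn ?size_XsubC.
Qed.

Lemma mup_map_oneDXn_exp (F : numFieldType) (x : F) m N : (0 < m)%N ->
  mup x (map_poly intr ((1 + 'X^m) ^+ N)) = (N * (x ^+ m == -1)%R)%N.
Proof.
by move=> m_gt0; rewrite rmorphXn /= map_oneDXn mupX ?mup_oneDXn ?oneDXn_neq0.
Qed.

Lemma Gn_monic n : Gn n \is monic.
Proof.
apply: monic_prod => k _; rewrite big_nat_cond; apply: monic_prod => i.
by case/andP=> /andP[i_gt0 _] _; apply: monic_oneDXn.
Qed.

Lemma mup_map_Gn (F : numFieldType) (x : F) n m0 :
    (forall i, (x ^+ i == -1) = (m0 %| i)%N && odd (i %/ m0)) ->
  mup x (map_poly intr (Gn n)) = (n %/ (2 * m0))%N.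
Proof.
have inner_neq0 k : \prod_(1 <= i < (n %/ 2 ^ k).+1) (1 + 'X^i : {poly F}) != 0.
  by rewrite prodf_seq_neq0; apply/allP => i _; rewrite oneDXn_neq0.
move=> x_period; rewrite /Gn rmorph_prod /= mup_prod => [|k _]; last first.
  by rewrite rmorph_prod /= (eq_bigr _ (fun i _ => map_oneDXn _ i)).
rewrite -[RHS](sum_odd_multiples_halvings n m0); apply: eq_bigr => k _.
rewrite rmorph_prod /= mup_prod -?sum_odd_multiples => [|i _]; last first.
  by rewrite map_oneDXn oneDXn_neq0.
apply: eq_big_nat => i /andP[i_gt0 _].
by rewrite map_oneDXn mup_oneDXn // x_period.
Qed.

Lemma in_ideal_mupP (g f : {poly int}) : g \is monic -> f != 0 ->
  in_ideal g f <->
  forall x : algC, (mup x (map_poly intr g) <= mup x (map_poly intr f))%N.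
Proof.
move=> g_monic f_neq0.
have map_neq0 p : p != 0 -> map_poly (intr : int -> algC) p != 0.
  by rewrite -!size_poly_eq0 size_map_inj_poly //; exact: intr_inj.
have mupP := dvdp_mupP (map_neq0 _ (monic_neq0 g_monic)) (map_neq0 _ f_neq0).
have mapP := dvdp_map_monicP f (@intr_inj algC) g_monic.
by split=> [/mapP/mupP | /mupP/mapP].
Qed.

Theorem theorem4p1 (n : nat) (f : {poly int}) : (1 <= n)%N ->
  (in_ideal (Gn n) f <->
   forall m : nat, (1 <= m)%N -> (m <= n %/ 2)%N ->
     in_ideal ((1 + 'X^m) ^+ (n %/ (2 * m))) f).
Proof.
(* G_0 = 1 and the right-hand side is then vacuous. *)
move=> _; have [->|f_neq0] := eqVneq f 0.
  by split=> [_ m _ _|_]; exists 0; rewrite mul0r.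
rewrite in_ideal_mupP ?Gn_monic //; split=> [le_mup m m_gt0 _ | ideal_m x].
  rewrite in_ideal_mupP ?monic_exp ?monic_oneDXn // => x.
  have [m0 x_period] := exprn_eqN1_period x.
  rewrite mup_map_oneDXn_exp // x_period (leq_trans _ (le_mup x)) //.
  rewrite (mup_map_Gn n x_period).
  case/boolP: (_ && _) => [/andP[dvd_m0m _]|]; last by rewrite muln0.
  have m0_gt0 : (0 < m0)%N.
    by move: dvd_m0m; case: m0 {x_period} => //; rewrite dvd0n gtn_eqF.
  by rewrite muln1 leq_div2l ?muln_gt0 // leq_mul2l dvdn_leq.
have [m0 x_period] := exprn_eqN1_period x.
rewrite (mup_map_Gn n x_period); have [->//|N_gt0] := posnP (n %/ (2 * m0)).
have m0_gt0 : (0 < m0)%N.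
  by move: N_gt0; case: m0 {x_period} => //; rewrite muln0 divn0.
have le_m0 : (m0 <= n %/ 2)%N.
  by rewrite leq_divRL // mulnC -divn_gt0 ?muln_gt0.
have := ideal_m m0 m0_gt0 le_m0.
rewrite in_ideal_mupP ?monic_exp ?monic_oneDXn // => /(_ x).
by rewrite mup_map_oneDXn_exp // x_period dvdnn divnn m0_gt0 muln1.
Qed.
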